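(* Let $\mathcal O$ be the suboperad of $\mathrm{CNCB}$ generated by $r:=T_{ubu}$ and $w:=T_{bub}$. Then $\mathcal O$ admits the presentation with generators $r,w$ of arity $2$ and relations $$w\circ_1 w=w\circ_2 w,\qquad r\circ_1 r=r\circ_2 r.$$ That is, $\mathcal O$ is isomorphic, via the morphism sending the generators to $r$ and $w$, to the quotient of the free operad on two binary generators by the operadic congruence generated by these relations.
   Context: For $n\ge2$, a bicoloured noncrossing configuration (BNC) of size $n$ is a regular polygon with vertices $1,\dots,n+1$ clockwise, together with disjoint sets of blue and red arcs among the arcs $(i,j)$, $1\le i<j\le n+1$. The arcs $(i,i+1)$ are the edges ($i$th edge), $(1,n+1)$ is the base, and the others are diagonals. Coloured arcs are pairwise noncrossing ($(i,j),(k,l)$ cross iff $i<k<j<l$ or $k<i<l<j$), and red arcs are diagonals. There is one BNC of size $1$, a blue segment, which is the unit. The operad $\mathrm{CNCB}$ has the BNCs as elements (arity = size). Its composition $\mathfrak C\circ_i\mathfrak D$ ($\mathfrak C$ of size $n$, $\mathfrak D$ of size $m$) glues the base of $\mathfrak D$ on the $i$th edge of $\mathfrak C$. Arcs $(a,b)$ of $\mathfrak C$ become $(\sigma(a),\sigma(b))$ with $\sigma(v)=v$ for $v\le i$ and $v+m-1$ otherwise, and arcs $(a,b)$ of $\mathfrak D$ become $(a+i-1,b+i-1)$, keeping colours. The exception is the arc $(i,i+m)$, which is red if the $i$th edge of $\mathfrak C$ and the base of $\mathfrak D$ are both uncoloured, blue if both are blue, and uncoloured otherwise. For $x,y,z\in\{b,u\}$,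 $T_{xyz}$ denotes the BNC of size $2$ (a triangle with vertices $1,2,3$) whose first edge $(1,2)$ has colour $x$, whose base $(1,3)$ has colour $y$, and whose second edge $(2,3)$ has colour $z$, where $b$ = blue and $u$ = uncoloured. The suboperad generated by a set is the smallest suboperad containing it. *)

From mathcomp Require Import all_boot.
Set Implicit Arguments. Unset Strict Implicit. Unset Printing Implicit Defensive.

Inductive col := Uc | Bc | Rc.

(* A (candidate) bicoloured noncrossing configuration of size [bsize]:
   vertices 1..bsize+1, and [bcol a b] is the colour of the arc (a,b)
   for 1 <= a < b <= bsize+1 (values outside this range are irrelevant). *)
Record bnc := BNC { bsize : nat; bcol : nat -> nat -> col }.

Definition is_arc (n a b : nat) : bool := (1 <= a) && (a < b) && (b <= n.+1).

Definition bnc_eq (C D : bnc) : Prop :=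
  bsize C = bsize D /\
  forall a b, is_arc (bsize C) a b -> bcol C a b = bcol D a b.

(* Validity of a BNC (documentation; size 1 is the blue segment). *)
Definition crossing (i j k l : nat) : bool := ((i < k) && (k < j) && (j < l)) || ((k < i) && (i < l) && (l < j)).
Definition valid_bnc (C : bnc) : Prop :=
  let n := bsize C in
  (n = 1 /\ bcol C 1 2 = Bc) \/
  (2 <= n /\
   (forall a b, is_arc n a b -> bcol C a b = Rc -> (a.+1 < b) /\ ~ (a = 1 /\ b = n.+1)) /\
   (forall a b c d, is_arc n a b -> is_arc n c d -> bcol C a b <> Uc -> bcol C c d <> Uc ->
      ~~ crossing a b c d)).

(* Colour of the arc (i, i+m) created by gluing. *)
Definition glue_col (x y : col) : col :=
  match x, y with
  | Uc, Uc => Rc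
  | Bc, Bc => Bc
  | _, _ => Uc
  end.

(* Partial composition C o_i D: glue the base of D on the i-th edge of C. *)
Definition compb (C : bnc) (i : nat) (D : bnc) : bnc :=
  let n := bsize C in let m := bsize D in
  let sinv v := if v <= i then v else v - (m - 1) in
  let inimg v := (v <= i) || (i + m <= v) in
  {| bsize := n + m - 1;
     bcol := fun a b =>
       if (a == i) && (b == i + m) then glue_col (bcol C i i.+1) (bcol D 1 m.+1)
       else if (i <= a) && (b <= i + m) then bcol D (a - i).+1 (b - i).+1
       else if inimg a && inimg b then bcol C (sinv a) (sinv b)
       else Uc |}.

Definition unit_bnc : bnc := {| bsize := 1; bcol := fun a b => if (a == 1) && (b == 2) then Bc else Uc |}.

Definition T (x y z : col) : bnc :=
  {| bsize := 2;
     bcol := fun a b =>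
       if (a == 1) && (b == 2) then x
       else if (a == 1) && (b == 3) then y
       else if (a == 2) && (b == 3) then z
       else Uc |}.

Definition r_bnc : bnc := T Uc Bc Uc.
Definition w_bnc : bnc := T Bc Uc Bc.

Inductive in_O : bnc -> Prop :=
| inO_unit : in_O unit_bnc
| inO_r : in_O r_bnc
| inO_w : in_O w_bnc
| inO_comp C D i : in_O C -> in_O D -> 1 <= i <= bsize C -> in_O (compb C i D).

(* The free (nonsymmetric) operad on two binary generators: planar binary trees
   with internal nodes labelled by a generator; leaves are inputs. *)
Inductive gen := gR | gW.
Inductive tree := Leaf | Node of gen & tree & tree.

Definition gen_bnc (g : gen) : bnc := match g with gR => r_bnc | gW => w_bnc end.

Fixpoint ev (t : tree) : bnc :=
  match t with
  | Leaf => unit_bnc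
  | Node g l r => compb (compb (gen_bnc g) 2 (ev r)) 1 (ev l)
  end.

(* Operadic congruence generated by  g o_1 g = g o_2 g  for g = w and g = r:
   smallest equivalence relation containing all instances
   g(g(a,b),c) = g(a,g(b,c)) and compatible with the tree constructors. *)
Inductive cong : tree -> tree -> Prop :=
| cong_assoc g a b c : cong (Node g (Node g a b) c) (Node g a (Node g b c))
| cong_refl t : cong t t
| cong_sym t u : cong t u -> cong u t
| cong_trans t u v : cong t u -> cong u v -> cong t v
| cong_node g a a' b b' : cong a a' -> cong b b' -> cong (Node g a b) (Node g a' b').

From mathcomp Require Import all_boot zify.

(* The composition compb satisfies the operad axioms (sequential and parallel
   associativity, left unit) on configurations whose edges and base are not
   red.  Hence ev commutes with grafting of trees, so the relation g o_1 g =
   g o_2 g, checked on three-leaf trees, holds for all its instances, and the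
   image of ev is closed under composition.  Conversely every tree is
   congruent to a normal form in which no left child carries the label of its
   parent, and ev is injective on normal forms: the base of ev (Node g l r)
   determines g, the arc (1, |l|+1) is coloured when the root label of l differs
   from g while the arcs (1, c) beyond it are not, which locates the split, and
   the two blocks give back ev l and ev r, since gluing with a non-red edge is
   injective on non-red bases. *)

Lemma bsize_compb C i D : bsize (compb C i D) = bsize C + bsize D - 1.
Proof. by []. Qed.

Variant compb_spec C i D a b : col -> Prop :=
| CompbGlue of a = i & b = i + bsize D :
    compb_spec C i D a b (glue_col (bcol C i i.+1) (bcol D 1 (bsize D).+1))
| CompbInner of i <= a & b <= i + bsize D & b < a + bsize D :
    compb_spec C i D a b (bcol D (a - i).+1 (b - i).+1)
| CompbLeft of b <= i : compb_spec C i D a b (bcol C a b)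
| CompbAcross of a <= i & i + bsize D <= b & a + bsize D < b :
    compb_spec C i D a b (bcol C a (b - (bsize D - 1)))
| CompbRight of i + bsize D <= a :
    compb_spec C i D a b (bcol C (a - (bsize D - 1)) (b - (bsize D - 1)))
| CompbCrossL of a < i & i < b & b < i + bsize D : compb_spec C i D a b Uc
| CompbCrossR of i < a & a < i + bsize D & i + bsize D < b : compb_spec C i D a b Uc.

Lemma compb_colP C i D a b :
  0 < bsize D -> a < b -> compb_spec C i D a b (bcol (compb C i D) a b).
Proof.
move=> hD hab /=.
case: ifP => [/andP[/eqP -> /eqP ->]|hglue]; first exact: CompbGlue.
case: ifP => [/andP[hia hbi]|hinner].
  by apply: CompbInner => //; move: hglue; lia.
case: ifP => [/andP[ha hb]|himg].
  have [hbi|hib] := leqP b i; first by rewrite (leq_trans (ltnW hab)) //; exact: CompbLeft.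
  case: ifP => hai; last by apply: CompbRight; move: ha; rewrite hai.
  by apply: CompbAcross => //; move: hglue hinner hb; lia.
have [hai|hia] := ltnP a i.
  by apply: CompbCrossL => //; move: himg hinner; lia.
by apply: CompbCrossR => //; move: himg hinner hglue; lia.
Qed.

Ltac compb_cases :=
  repeat match goal with |- context[bcol (compb ?C ?i ?D) ?a ?b] =>
    case: (@compb_colP C i D a b ltac:(simpl bsize; lia) ltac:(simpl bsize; lia));
    intros; simpl bsize in *; try (exfalso; lia)
  end.

Ltac arc_congr := try done; try (f_equal; lia); try (f_equal; f_equal; lia).

Lemma bnc_eq_refl C : bnc_eq C C.
Proof. by split. Qed.

Lemma bnc_eq_sym {C D} : bnc_eq C D -> bnc_eq D C.
Proof. by move=> [s h]; split=> // a b; rewrite -s => /h. Qed.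

Lemma bnc_eq_trans {C D E} : bnc_eq C D -> bnc_eq D E -> bnc_eq C E.
Proof. by move=> [s h] [s' h']; split=> [|a b H]; rewrite ?s // h // h' // -s. Qed.

Lemma compb_eq C C' D D' i : 0 < i <= bsize C -> 0 < bsize D ->
  bnc_eq C C' -> bnc_eq D D' -> bnc_eq (compb C i D) (compb C' i D').
Proof.
case: C' D' => n' c' [m' d'] Hi HD [/= <- hC] [/= <- hD]; split=> // a b.
rewrite /is_arc bsize_compb => /andP[/andP[Ha Hab] Hb]; compb_cases.
all: try (rewrite hC; [|rewrite /is_arc; lia]).
all: try (rewrite hD; [|rewrite /is_arc; lia]).
all: done.
Qed.

(* The part of validity on which the operad axioms depend. *)
Definition wf_bnc (C : bnc) : Prop :=
  [/\ 0 < bsize C, (forall k, 0 < k <= bsize C -> bcol C k k.+1 <> Rc),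
      bcol C 1 (bsize C).+1 <> Rc & (bsize C = 1 -> bcol C 1 2 = Bc)].

Lemma wf_compb A B i : wf_bnc A -> wf_bnc B -> 0 < i <= bsize A ->
  wf_bnc (compb A i B).
Proof.
move=> [sA eA bA uA] [sB eB bB uB] Hi; split; rewrite ?bsize_compb; first lia.
- move=> k Hk; compb_cases.
  + have hB1 : bsize B = 1 by lia.
    by rewrite hB1 uB //; case: (bcol A i i.+1) (eA i Hi).
  + have -> : (k.+1 - i).+1 = (k - i).+2 by lia.
    apply: eB; lia.
  + apply: eA; lia.
  + have -> : k.+1 - (bsize B - 1) = (k - (bsize B - 1)).+1 by lia.
    apply: eA; lia.
- compb_cases.
  + have hA1 : bsize A = 1 by lia.
    by subst i; rewrite uA //; case: (bcol B 1 (bsize B).+1).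
  + by have -> : (bsize A + bsize B - 1).+1 - (bsize B - 1) = (bsize A).+1 by lia.
- move=> h; compb_cases.
  have hA1 : bsize A = 1 by lia.
  have hB1 : bsize B = 1 by lia.
  by subst i; rewrite uA // hB1 uB.
Qed.

Lemma glue_colA x z : x <> Rc -> z <> Rc ->
  glue_col (glue_col x Bc) z = glue_col x (glue_col Bc z).
Proof. by case: x; case: z. Qed.

Lemma compbA A B C i j : wf_bnc A -> wf_bnc B -> wf_bnc C ->
  0 < i <= bsize A -> 0 < j <= bsize B ->
  bnc_eq (compb (compb A i B) (i + j - 1) C) (compb A i (compb B j C)).
Proof.
move=> [sA eA _ _] [sB _ _ uB] [sC _ bC _] Hi Hj.
split; first by rewrite !bsize_compb; lia.
move=> a b; rewrite /is_arc !bsize_compb => /andP[/andP[Ha Hab] Hb].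
compb_cases; arc_congr.
have hB1 : bsize B = 1 by lia.
have j1 : j = 1 by lia.
by subst j; rewrite hB1 uB // glue_colA //; apply: eA; lia.
Qed.

Lemma compbAC A B C i j : 0 < bsize B -> 0 < bsize C ->
  0 < i -> i < j -> j <= bsize A ->
  bnc_eq (compb (compb A i B) (j + bsize B - 1) C) (compb (compb A j C) i B).
Proof.
move=> sB sC Hi Hij Hj; split; first by rewrite !bsize_compb; lia.
move=> a b; rewrite /is_arc !bsize_compb => /andP[/andP[Ha Hab] Hb].
by compb_cases; arc_congr.
Qed.

Lemma comp1b D : wf_bnc D -> bnc_eq (compb unit_bnc 1 D) D.
Proof.
move=> [sD _ bD _]; split; first by rewrite bsize_compb /=; lia.
move=> a b; rewrite /is_arc bsize_compb => /andP[/andP[Ha Hab] Hb]; simpl bsize in *.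
compb_cases; rewrite /=; arc_congr.
by subst a b; rewrite add1n; case: (bcol D 1 (bsize D).+1) bD.
Qed.

Fixpoint leaves (t : tree) : nat :=
  if t is Node _ l r then leaves l + leaves r else 1.

Lemma leaves_gt0 t : 0 < leaves t.
Proof. by elim: t => //= g l IHl r _; rewrite addn_gt0 IHl. Qed.

Lemma bsize_gen g : bsize (gen_bnc g) = 2.
Proof. by case: g. Qed.

Lemma wf_gen g : wf_bnc (gen_bnc g).
Proof.
split; rewrite ?bsize_gen //; try by case: g.
move=> k Hk; have [->|->] : k = 1 \/ k = 2 by lia.
all: by case: g.
Qed.

Lemma wf_unit : wf_bnc unit_bnc.
Proof. by split=> //= k Hk; have -> : k = 1 by lia. Qed.

Lemma ev_node g l r : ev (Node g l r) = compb (compb (gen_bnc g) 2 (ev r)) 1 (ev l).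
Proof. by []. Qed.

Lemma wf_ev t : wf_bnc (ev t).
Proof.
elim: t => [|g l IHl r IHr]; first exact: wf_unit.
have [sR _ _ _] := IHr.
rewrite ev_node; apply: wf_compb => //; last by rewrite bsize_compb bsize_gen; lia.
by apply: wf_compb; rewrite ?bsize_gen //; exact: wf_gen.
Qed.

Lemma bsize_ev t : bsize (ev t) = leaves t.
Proof.
elim: t => // g l IHl r IHr.
by rewrite ev_node /= bsize_gen IHl IHr; have := leaves_gt0 l; lia.
Qed.

Lemma in_O_ev t : in_O (ev t).
Proof.
elim: t => [|g l IHl r IHr]; first exact: inO_unit.
rewrite ev_node; apply: inO_comp => //; last by rewrite bsize_compb bsize_gen bsize_ev; have := leaves_gt0 r; lia.
by apply: inO_comp; rewrite ?bsize_gen //; case: g; [exact: inO_r | exact: inO_w].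
Qed.

Lemma ev_gen g : bnc_eq (ev (Node g Leaf Leaf)) (gen_bnc g).
Proof.
split=> [|a b]; first by case: g.
rewrite /is_arc bsize_ev /= => Hab.
have : (a, b) \in [:: (1, 2); (1, 3); (2, 3)] by rewrite !inE !xpair_eqE; lia.
by rewrite !inE => /or3P[] /eqP[-> ->]; case: g.
Qed.

Fixpoint graft (t : tree) (i : nat) (u : tree) : tree :=
  if t is Node g l r then
    if i <= leaves l then Node g (graft l i u) r else Node g l (graft r (i - leaves l) u)
  else u.

Lemma graft_ev t i u : 0 < i <= leaves t ->
  bnc_eq (compb (ev t) i (ev u)) (ev (graft t i u)).
Proof.
elim: t i => [|g l IHl r IHr] i /= Hi.
  by rewrite (_ : i = 1); [exact: comp1b (wf_ev u) | lia].
have wfG := wf_gen g; have sG := bsize_gen g.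
have wfL := wf_ev l; have wfR := wf_ev r; have wfU := wf_ev u.
have sL := bsize_ev l; have sR := bsize_ev r; have sU := bsize_ev u.
have pL := leaves_gt0 l; have pR := leaves_gt0 r; have pU := leaves_gt0 u.
have wfGR : wf_bnc (compb (gen_bnc g) 2 (ev r)) by apply: wf_compb; rewrite ?sG.
case: ifP => Hil; rewrite !ev_node.
  apply: bnc_eq_trans.
    have := compbA (compb (gen_bnc g) 2 (ev r)) (ev l) (ev u) 1 i wfGR wfL wfU.
    by rewrite addKn; apply; rewrite ?bsize_compb; lia.
  apply: compb_eq; rewrite ?bsize_compb ?bsize_ev; try lia; first exact: bnc_eq_refl.
  by apply: IHl; lia.
set j := i - leaves l + 1.
apply: bnc_eq_trans.
  have := compbAC (compb (gen_bnc g) 2 (ev r)) (ev l) (ev u) 1 j.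
  have -> : j + bsize (ev l) - 1 = i by rewrite /j; lia.
  by apply; rewrite /j ?bsize_compb; lia.
apply: compb_eq; rewrite ?bsize_compb ?bsize_ev; try lia; last exact: bnc_eq_refl.
apply: bnc_eq_trans.
  have := compbA (gen_bnc g) (ev r) (ev u) 2 (j - 1) wfG wfR wfU.
  have -> : 2 + (j - 1) - 1 = j by rewrite /j; lia.
  by apply; rewrite /j; lia.
apply: compb_eq; rewrite ?bsize_compb ?bsize_ev; try lia; first exact: bnc_eq_refl.
have -> : j - 1 = i - leaves l by rewrite /j; lia.
by apply: IHr; lia.
Qed.

Lemma bnc_eq_leaves {t t'} : bnc_eq (ev t) (ev t') -> leaves t = leaves t'.
Proof. by case; rewrite !bsize_ev. Qed.

Lemma graft_eq t t' i u : bnc_eq (ev t) (ev t') -> 0 < i <= leaves t ->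
  bnc_eq (ev (graft t i u)) (ev (graft t' i u)).
Proof.
move=> E Hi; have Hi' : 0 < i <= leaves t' by rewrite -(bnc_eq_leaves E).
apply: bnc_eq_trans (bnc_eq_sym (graft_ev _ _ u Hi)) (bnc_eq_trans _ (graft_ev _ _ u Hi')).
by apply: compb_eq; rewrite ?bsize_ev ?leaves_gt0 //; exact: bnc_eq_refl.
Qed.

Lemma ev_assoc g a b c :
  bnc_eq (ev (Node g (Node g a b) c)) (ev (Node g a (Node g b c))).
Proof.
have E : bnc_eq (ev (Node g (Node g Leaf Leaf) Leaf)) (ev (Node g Leaf (Node g Leaf Leaf))).
  split=> [|x y]; first by case: g.
  rewrite /is_arc bsize_ev /= => Hxy.
  have : (x, y) \in [:: (1, 2); (1, 3); (1, 4); (2, 3); (2, 4); (3, 4)].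
    by rewrite !inE !xpair_eqE; lia.
  by rewrite !inE => /or4P[|||/or3P[]] /eqP[-> ->]; case: g.
change (bnc_eq (ev (graft (graft (graft (Node g (Node g Leaf Leaf) Leaf) 3 c) 2 b) 1 a))
               (ev (graft (graft (graft (Node g Leaf (Node g Leaf Leaf)) 3 c) 2 b) 1 a))).
have := leaves_gt0 c; have := leaves_gt0 b => pb pc.
apply: graft_eq; last by rewrite /=; lia.
apply: graft_eq; last by rewrite /=; lia.
by apply: graft_eq.
Qed.

Lemma cong_ev {t u} : cong t u -> bnc_eq (ev t) (ev u).
Proof.
elim=> {t u} [g a b c|t|t u _|t u v _ Etu _ Euv|g a a' b b' _ Ea _ Eb].
- exact: ev_assoc.
- exact: bnc_eq_refl.
- exact: bnc_eq_sym.
- exact: bnc_eq_trans Etu Euv.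
rewrite !ev_node; apply: compb_eq Ea; rewrite ?bsize_ev ?leaves_gt0 //.
  by rewrite bsize_compb bsize_gen bsize_ev; have := leaves_gt0 b; lia.
by apply: compb_eq Eb; rewrite ?bsize_gen ?bsize_ev ?leaves_gt0 //; exact: bnc_eq_refl.
Qed.

Lemma ev_onto C : in_O C -> exists t, bnc_eq (ev t) C.
Proof.
elim=> {C} [||| C D i _ [t Et] _ [u Eu] Hi].
- by exists Leaf; exact: bnc_eq_refl.
- by exists (Node gR Leaf Leaf); exact: ev_gen.
- by exists (Node gW Leaf Leaf); exact: ev_gen.
have [sC _] := Et; rewrite bsize_ev in sC.
have Hi' : 0 < i <= leaves t by rewrite sC.
exists (graft t i u); apply: bnc_eq_trans (bnc_eq_sym (graft_ev _ _ u Hi')) _.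
by apply: compb_eq; rewrite ?bsize_ev ?leaves_gt0.
Qed.

Ltac ev_node_cases g l r :=
  rewrite ev_node;
  have := bsize_gen g; have := bsize_ev l; have := bsize_ev r;
  have := leaves_gt0 l; have := leaves_gt0 r => ??? ??;
  compb_cases; arc_congr.

Section NodeColours.

Variables (g : gen) (l r : tree).

Lemma ev_node_col_left a b : 0 < a < b -> b <= (leaves l).+1 ->
  ~~ ((a == 1) && (b == (leaves l).+1)) -> bcol (ev (Node g l r)) a b = bcol (ev l) a b.
Proof. by move=> *; ev_node_cases g l r. Qed.

Lemma ev_node_col_right a b : 0 < a < b -> b <= (leaves r).+1 ->
  ~~ ((a == 1) && (b == (leaves r).+1)) ->
  bcol (ev (Node g l r)) (leaves l + a) (leaves l + b) = bcol (ev r) a b.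
Proof. by move=> *; ev_node_cases g l r. Qed.

Lemma ev_node_root_left : bcol (ev (Node g l r)) 1 (leaves l).+1 =
  glue_col (bcol (gen_bnc g) 1 2) (bcol (ev l) 1 (leaves l).+1).
Proof. by ev_node_cases g l r. Qed.

Lemma ev_node_root_right :
  bcol (ev (Node g l r)) (leaves l).+1 (leaves l + leaves r).+1 =
  glue_col (bcol (gen_bnc g) 2 3) (bcol (ev r) 1 (leaves r).+1).
Proof. by ev_node_cases g l r. Qed.

Lemma ev_node_col_mid c : (leaves l).+1 < c <= leaves l + leaves r ->
  bcol (ev (Node g l r)) 1 c = Uc.
Proof. by move=> *; ev_node_cases g l r. Qed.

Lemma ev_node_base : bcol (ev (Node g l r)) 1 (leaves l + leaves r).+1 = bcol (gen_bnc g) 1 3.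
Proof. by ev_node_cases g l r. Qed.

End NodeColours.

Lemma bnc_eq_ev_col {t t' a b} : bnc_eq (ev t) (ev t') ->
  0 < a < b -> b <= (leaves t).+1 -> bcol (ev t) a b = bcol (ev t') a b.
Proof. by case=> _ E *; apply: E; rewrite /is_arc bsize_ev; lia. Qed.

Lemma ev_eq_of_col t t' : leaves t = leaves t' ->
  (forall a b, 0 < a < b -> b <= (leaves t).+1 -> bcol (ev t) a b = bcol (ev t') a b) ->
  bnc_eq (ev t) (ev t').
Proof.
move=> el E; split=> [|a b]; rewrite /is_arc !bsize_ev //.
by case/andP; exact: E.
Qed.

Lemma glue_col_inj x y z : x <> Rc -> y <> Rc -> z <> Rc ->
  glue_col x y = glue_col x z -> y = z.
Proof. by case: x; case: y; case: z. Qed.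

Lemma ev_base_not_red t : bcol (ev t) 1 (leaves t).+1 <> Rc.
Proof. by have [_ _ + _] := wf_ev t; rewrite bsize_ev. Qed.

Lemma ev_node_gen_eq {g g' l r l' r'} :
  bnc_eq (ev (Node g l r)) (ev (Node g' l' r')) -> g = g'.
Proof.
move=> E; have /= el := bnc_eq_leaves E.
have : bcol (gen_bnc g) 1 3 = bcol (gen_bnc g') 1 3.
  rewrite -(ev_node_base g l r) -(ev_node_base g' l' r') -el.
  by apply: (bnc_eq_ev_col E); have := leaves_gt0 l; rewrite /=; lia.
by case: g g' {E} => [] [].
Qed.

Definition root_gen (t : tree) : option gen := if t is Node g _ _ then Some g else None.

Lemma leaves_left_le {g l r l' r'} : root_gen l' <> Some g ->
  bnc_eq (ev (Node g l r)) (ev (Node g l' r')) -> leaves l' <= leaves l.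
Proof.
move=> hl' E; rewrite leqNgt; apply/negP => lt.
have /= el := bnc_eq_leaves E.
have : Uc = glue_col (bcol (gen_bnc g) 1 2) (bcol (ev l') 1 (leaves l').+1).
  rewrite -(ev_node_col_mid g l r (leaves l').+1); last by have := leaves_gt0 r'; lia.
  by rewrite -(ev_node_root_left g l' r'); apply: (bnc_eq_ev_col E); rewrite /=; lia.
case: l' hl' lt {E el} => [|h x y] hl' lt; first by have := leaves_gt0 l; rewrite /= in lt; lia.
by rewrite ev_node_base; case: g h hl' {lt} => [] [].
Qed.

Section NodeInj.

Context {g : gen} {l r l' r' : tree}.
Hypothesis el : leaves l = leaves l'.
Hypothesis E : bnc_eq (ev (Node g l r)) (ev (Node g l' r')).

Lemma ev_node_eq_left : bnc_eq (ev l) (ev l').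
Proof.
apply: ev_eq_of_col => // a b Hab Hb.
case: (boolP ((a == 1) && (b == (leaves l).+1))) => [/andP[/eqP-> /eqP->]|hab].
  apply: (@glue_col_inj (bcol (gen_bnc g) 1 2)); first by case: g.
  - exact: ev_base_not_red.
  - by rewrite el; exact: ev_base_not_red.
  have := ev_node_root_left g l' r'; rewrite -el => <-.
  rewrite -(ev_node_root_left g l r).
  by apply: (bnc_eq_ev_col E); rewrite /=; have := leaves_gt0 r; lia.
have <- := ev_node_col_left g l r _ _ Hab Hb hab.
have <- := ev_node_col_left g l' r' _ _ Hab ltac:(by rewrite -el) ltac:(by rewrite -el).
by apply: (bnc_eq_ev_col E); rewrite /=; lia.
Qed.

Lemma ev_node_eq_right : bnc_eq (ev r) (ev r').
Proof.
have /= er := bnc_eq_leaves E; have {}er : leaves r = leaves r' by lia.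
apply: ev_eq_of_col => // a b Hab Hb.
case: (boolP ((a == 1) && (b == (leaves r).+1))) => [/andP[/eqP-> /eqP->]|hab].
  apply: (@glue_col_inj (bcol (gen_bnc g) 2 3)); first by case: g.
  - exact: ev_base_not_red.
  - by rewrite er; exact: ev_base_not_red.
  have := ev_node_root_right g l' r'; rewrite -el -er => <-.
  rewrite -(ev_node_root_right g l r).
  by apply: (bnc_eq_ev_col E); rewrite /=; lia.
have <- := ev_node_col_right g l r _ _ Hab Hb hab.
have <- := ev_node_col_right g l' r' _ _ Hab ltac:(by rewrite -er) ltac:(by rewrite -er).
by rewrite -el; apply: (bnc_eq_ev_col E); rewrite /=; lia.
Qed.

End NodeInj.

Fixpoint normal (t : tree) : Prop :=
  if t is Node g l r then [/\ normal l, normal r & root_gen l <> Some g] else True.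

Lemma ev_inj_normal t t' : normal t -> normal t' -> bnc_eq (ev t) (ev t') -> t = t'.
Proof.
elim: t t' => [|g l IHl r IHr] [|g' l' r'] //.
- by move=> _ _ /bnc_eq_leaves /=; have := leaves_gt0 l'; have := leaves_gt0 r'; lia.
- by move=> _ _ /bnc_eq_leaves /=; have := leaves_gt0 l; have := leaves_gt0 r; lia.
move=> [nl nr hl] [nl' nr' hl'] E.
have eg := ev_node_gen_eq E; subst g'.
have el : leaves l = leaves l'.
  by apply/eqP; rewrite eqn_leq (leaves_left_le hl' E) (leaves_left_le hl (bnc_eq_sym E)).
by rewrite (IHl l' nl nl' (ev_node_eq_left el E)) (IHr r' nr nr' (ev_node_eq_right el E)).
Qed.

Lemma cong_normal_node g l r : normal l -> normal r ->
  exists2 n, cong (Node g l r) n & normal n.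
Proof.
elim: l r => [|h a _ b IHb] r nl nr; first by exists (Node g Leaf r) => //; exact: cong_refl.
have [eg|ne] : h = g \/ h <> g by case: (h); case: (g); [left|right|right|left].
  subst h; have [na nb ha] := nl; have [n cn Nn] := IHb r nb nr.
  exists (Node g a n); last by split.
  exact: cong_trans (cong_assoc g a b r) (cong_node g (cong_refl a) cn).
by exists (Node g (Node h a b) r) => //; [exact: cong_refl | split=> // -[]].
Qed.

Lemma cong_normal t : exists2 n, cong t n & normal n.
Proof.
elim: t => [|g l [l' cl Nl] r [r' cr Nr]]; first by exists Leaf => //; exact: cong_refl.
have [n cn Nn] := cong_normal_node g l' r' Nl Nr.
by exists n => //; apply: cong_trans cn; exact: cong_node.
Qed.

Theorem theorem3p33 :
  (forall t : tree, in_O (ev t)) /\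
  (forall C : bnc, in_O C -> exists t : tree, bnc_eq (ev t) C) /\
  (forall t1 t2 : tree, bnc_eq (ev t1) (ev t2) <-> cong t1 t2).
Proof.
split; first exact: in_O_ev.
split; first exact: ev_onto.
move=> t1 t2; split; last exact: cong_ev.
move=> E; have [n1 c1 N1] := cong_normal t1; have [n2 c2 N2] := cong_normal t2.
have e : n1 = n2.
  apply: ev_inj_normal N1 N2 _.
  exact: bnc_eq_trans (bnc_eq_sym (cong_ev c1)) (bnc_eq_trans E (cong_ev c2)).
by subst n2; apply: cong_trans c1 (cong_sym c2).
Qed.
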